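(* Let $\ell\ge 3$ and let $\mathbf{C}$ be a real $\ell\times\ell$ matrix of the following form. Its first row is $(\alpha,\beta',0,\ldots,0,\beta')$ and its first column is $(\alpha,\beta,0,\ldots,0,\beta)^T$. The trailing $(\ell-1)\times(\ell-1)$ block $\mathbf{S}$ (rows and columns $2,\ldots,\ell$ of $\mathbf{C}$, indexed $1,\ldots,\ell-1$) is tridiagonal with - $\mathbf{S}_{k,k}=\alpha_k$ for $1\le k\le \ell-1$, where $\alpha_k=\alpha_{\ell-k}$; - $\mathbf{S}_{k,k+1}=\beta_k$ and $\mathbf{S}_{k+1,k}=\beta_{\ell-1-k}$ for $1\le k\le \ell-2$. Here $\alpha,\beta,\beta',\alpha_k,\beta_k$ are real numbers, so the superdiagonal of $\mathbf{S}$ reads $\beta_1,\ldots,\beta_{\ell-2}$ and the subdiagonal reads $\beta_{\ell-2},\ldots,\beta_1$. Suppose $\beta_k\beta_{\ell-k-1}>0$ for all $1\le k\le \ell-2$ and $\beta\beta'>0$. Then all eigenvalues of $\mathbf{C}$ are real. *)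

From HB Require Import structures.
From mathcomp Require Import all_boot all_order all_algebra.
From mathcomp Require Import complex.
Set Implicit Arguments. Unset Strict Implicit. Unset Printing Implicit Defensive.
Import Order.TTheory GRing.Theory Num.Theory.
Local Open Scope ring_scope.

(* The l x l matrix C of the paper, with 0-based indices 0..l-1.
   Row/column 0 is the paper's row/column 1; index k >= 1 is the paper's
   row/column k+1, i.e. index k of the trailing block S.
   a k = alpha_k, b k = beta_k (only values for 1 <= k <= l-1 resp. l-2 matter). *)
Definition Cmat (R : pzRingType) (l : nat) (alpha beta beta' : R) (a b : nat -> R)
  : 'M[R]_l :=
  \matrix_(i < l, j < l)
    let i := (i : nat) in let j := (j : nat) in
    if (i == 0) && (j == 0) then alpha
    else if i == 0 then (if (j == 1) || (j == l.-1) then beta' else 0)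
    else if j == 0 then (if (i == 1) || (i == l.-1) then beta else 0)
    else if i == j then a i
    else if j == i.+1 then b i
    else if i == j.+1 then b (l.-1 - j)%N
    else 0.

(* The complexified matrix, so that its (possibly non-real) eigenvalues make sense. *)
Definition Cmat_C (R : rcfType) (l : nat) (alpha beta beta' : R) (a b : nat -> R)
  : 'M[R[i]]_l :=
  map_mx (fun x : R => (x%:C)%C) (Cmat l alpha beta beta' a b).

From mathcomp Require Import all_boot all_order all_algebra.
From mathcomp Require Import complex.
From mathcomp Require Import ring zify.
Set Implicit Arguments.
Unset Strict Implicit.
Unset Printing Implicit Defensive.

Import Order.TTheory GRing.Theory Num.Theory.
Local Open Scope ring_scope.

(* C is symmetrizable: there are positive weights w with C i j * w j = C j i * w i,
   i.e. C diag(w) is symmetric. For such a matrix and an eigenvector v for z, the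
   sum of v_i C_ij w_j conj(v_j) over all i, j equals z times the positive number
   sum_j w_j |v_j|^2 and is its own conjugate, so z is real. The weights are forced
   along the path 0, 1, ..., l-1 by the tridiagonal entries, and positive because
   b_k b_(l-1-k) > 0; the closing edge (l-1, 0) is consistent because the product of
   the superdiagonal of S equals that of its subdiagonal, which lists the same
   entries in reverse order. *)

Lemma symmetrizable_eigenvalue_real (C : numClosedFieldType) (n : nat)
    (A : 'M[C]_n) (d : 'I_n -> C) (z : C) :
  (forall i j, A i j \is Num.real) -> (forall j, 0 < d j) ->
  (forall i j, A i j * d j = A j i * d i) ->
  eigenvalue A z -> z \is Num.real.
Proof.
move=> A_real d_gt0 A_symmetrizable /eigenvalueP [v Av_zv v_neq0].
pose N := \sum_j d j * `|v 0 j| ^+ 2.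
pose S := \sum_j \sum_i v 0 i * (A i j * d j) * (v 0 j)^*.
have S_zN : S = z * N.
  rewrite /N mulr_sumr; apply: eq_bigr => j _.
  have := congr1 (fun u : 'rV_n => u 0 j) Av_zv; rewrite !mxE => vAj.
  rewrite -mulr_suml; under eq_bigr do rewrite mulrA.
  by rewrite -mulr_suml vAj normCK [_ * d j]mulrAC -!mulrA.
have S_real : S \is Num.real.
  apply/CrealP; rewrite {2}/S exchange_big rmorph_sum; apply: eq_bigr => j _.
  rewrite rmorph_sum; apply: eq_bigr => i _.
  rewrite !rmorphM /= conjCK (conj_Creal (A_real i j)) (conj_Creal (gtr0_real (d_gt0 j))).
  by rewrite A_symmetrizable -mulrA mulrC (mulrC (A j i * d i)).
have N_gt0 : 0 < N.
  have [j vj_neq0] := rV0Pn _ v_neq0.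
  rewrite /N (bigD1 j) //= ltr_pwDl //.
    by rewrite mulr_gt0 // exprn_gt0 // normr_gt0.
  by rewrite sumr_ge0 // => k _; rewrite mulr_ge0 ?exprn_ge0 ?normr_ge0 ?ltW.
have -> : z = S / N by rewrite S_zN mulfK // gt_eqF.
exact: rpred_div S_real (gtr0_real N_gt0).
Qed.

Lemma symmetrizable_complex_eigenvalue_Im0 (R : rcfType) (n : nat)
    (A : 'M[R]_n) (d : 'I_n -> R) (z : R[i]) :
  (forall j, 0 < d j) -> (forall i j, A i j * d j = A j i * d i) ->
  eigenvalue (map_mx (fun x : R => (x%:C)%C) A) z -> complex.Im z = 0.
Proof.
move=> d_gt0 A_symmetrizable z_eigen.
have : z \is Num.real.
  apply: (symmetrizable_eigenvalue_real (d := fun j => (d j)%:C%C)) z_eigen.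
  - by move=> i j; rewrite mxE complex_real.
  - by move=> j; rewrite ltcR.
  - by move=> i j; rewrite !mxE -!rmorphM /= A_symmetrizable.
by case: z {z_eigen} => x y; rewrite complex_real => /eqP.
Qed.

Lemma divr_gt0_of_mulr_gt0 (R : realFieldType) (x y : R) : 0 < x * y -> 0 < x / y.
Proof.
move=> xy_gt0; have y_neq0 : y != 0 by apply: contraTneq xy_gt0 => ->; rewrite mulr0 ltxx.
have -> : x / y = (x * y) / y ^+ 2 by rewrite expr2 invfM mulrA mulfK.
by rewrite divr_gt0 // exprn_even_gt0.
Qed.

Definition Cmat_weight (R : fieldType) (l : nat) (beta beta' : R) (b : nat -> R)
    (j : nat) : R :=
  if j == 0%N then 1 else beta / beta' * \prod_(1 <= k < j) (b (l.-1 - k)%N / b k).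

Section CmatSymmetrizable.
Variables (R : realFieldType) (l : nat) (alpha beta beta' : R) (a b : nat -> R).
Hypothesis b_mul_gt0 : forall k : nat, (1 <= k <= l - 2)%N -> 0 < b k * b (l - k - 1)%N.
Hypothesis beta_mul_gt0 : 0 < beta * beta'.

Local Notation C := (Cmat l alpha beta beta' a b).
Local Notation w := (Cmat_weight l beta beta' b).

Let b_neq0 k : (1 <= k <= l - 2)%N -> b k != 0.
Proof. by move/b_mul_gt0; apply: contraTneq => ->; rewrite mul0r ltxx. Qed.

Let beta'_neq0 : beta' != 0.
Proof. by apply: contraTneq beta_mul_gt0 => ->; rewrite mulr0 ltxx. Qed.

Lemma Cmat_weight_gt0 j : (j < l)%N -> 0 < w j.
Proof.
rewrite /Cmat_weight => j_lt_l; case: eqP => // _.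
rewrite mulr_gt0 ?divr_gt0_of_mulr_gt0 // big_nat_cond prodr_gt0 // => k.
move=> /andP[/andP[k_ge1 k_lt_j] _]; apply: divr_gt0_of_mulr_gt0.
have -> : (l.-1 - k = l - k - 1)%N by lia.
by rewrite mulrC b_mul_gt0 //; lia.
Qed.

Lemma Cmat_weight1 : w 1 = beta / beta'.
Proof. by rewrite /Cmat_weight big_geq ?mulr1. Qed.

Lemma Cmat_weightS j : (1 <= j <= l - 2)%N -> b j * w j.+1 = b (l.-1 - j)%N * w j.
Proof.
move=> j_range; have j_gt0 : (0 < j)%N by case/andP: j_range.
rewrite /Cmat_weight /= (gtn_eqF j_gt0) big_nat_recr //=.
by field; rewrite beta'_neq0 b_neq0.
Qed.

Lemma Cmat_weight_last : (1 < l)%N -> w l.-1 = beta / beta'.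
Proof.
move=> l_gt1.
have prod_rev : \prod_(1 <= k < l.-1) b (l.-1 - k)%N = \prod_(1 <= k < l.-1) b k.
  by rewrite big_nat_rev; apply: eq_big_nat => k k_range; congr b; lia.
have prod_neq0 : \prod_(1 <= k < l.-1) b k != 0.
  rewrite big_nat_cond prodf_seq_neq0; apply/allP => k _.
  by apply/implyP => /andP[k_range _]; apply: b_neq0; lia.
rewrite /Cmat_weight ifN; last by lia.
by rewrite prodf_div prod_rev divff ?mulr1.
Qed.

Lemma Cmat_symmetrizable_lt (i j : 'I_l) : (i < j)%N -> C i j * w j = C j i * w i.
Proof.
case: i j => [i i_lt_l] [j j_lt_l] /= i_lt_j; rewrite !mxE /=.
case: i i_lt_l i_lt_j => [|i] i_lt_l i_lt_j;
  case: j j_lt_l i_lt_j => [|j] j_lt_l i_lt_j //=.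
  case: orP => [j_end | _]; last by rewrite !mul0r.
  have -> : w j.+1 = beta / beta'.
    case: j_end => /eqP ->; first exact: Cmat_weight1.
    by apply: Cmat_weight_last; lia.
  by rewrite /Cmat_weight /= mulr1 mulrCA divff ?mulr1.
have i_lt_j' : (i.+1 < j.+1)%N by [].
rewrite (ltn_eqF i_lt_j') (gtn_eqF i_lt_j') (ltn_eqF (leqW i_lt_j')) /=.
case: eqP => [-> | _]; last by rewrite !mul0r.
by apply: Cmat_weightS; lia.
Qed.

Lemma Cmat_symmetrizable (i j : 'I_l) : C i j * w j = C j i * w i.
Proof.
case: (ltngtP i j) => [i_lt_j | j_lt_i | /val_inj -> //].
  exact: Cmat_symmetrizable_lt.
by symmetry; apply: Cmat_symmetrizable_lt.
Qed.

End CmatSymmetrizable.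

Theorem lemmaA2 (R : rcfType) (l : nat) (alpha beta beta' : R) (a b : nat -> R) :
  (3 <= l)%N ->
  (forall k : nat, (1 <= k <= l.-1)%N -> a k = a (l - k)%N) ->
  (forall k : nat, (1 <= k <= l - 2)%N -> 0 < b k * b (l - k - 1)%N) ->
  0 < beta * beta' ->
  forall z : R[i], eigenvalue (Cmat_C l alpha beta beta' a b) z ->
    complex.Im z = 0.
Proof.
move=> _ _ b_mul_gt0 beta_mul_gt0 z.
apply: (symmetrizable_complex_eigenvalue_Im0 (d := Cmat_weight l beta beta' b)).
  by move=> j; apply: Cmat_weight_gt0.
by move=> i j; apply: Cmat_symmetrizable.
Qed.
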